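(* Let $m\ge 1$, let $\mathcal{I}\subseteq\mathcal{M}_m$ be a decreasing monomial set with $r=\max_{f\in\mathcal{I}}\deg f$, let $f,g\in\mathcal{I}_r$ and $h=\gcd(f,g)\in\mathcal{M}_m$. Then \[ {\rm LTA}(m,2)\cdot h\cdot \Big({\rm LTA}(m,2)\cdot \tfrac{f}{h}+{\rm LTA}(m,2)\cdot \tfrac{g}{h}\Big)= {\rm LTA}(m,2)_h\cdot h\cdot \Big({\rm LTA}(m,2)_{f}\cdot \tfrac{f}{h}+{\rm LTA}(m,2)_g\cdot \tfrac{g}{h}\Big). \]
   Context: $\mathbf{R}_m=\mathbb{F}_2[x_0,\dots,x_{m-1}]/(x_0^2-x_0,\dots,x_{m-1}^2-x_{m-1})$. $\mathcal{M}_m$ is the set of monomials $x_0^{i_0}\cdots x_{m-1}^{i_{m-1}}$, $i_j\in\{0,1\}$. For a monomial $f$, $\operatorname{ind}(f)$ is the set of indices of variables dividing $f$, $\deg f=|\operatorname{ind}(f)|$; $\gcd(f,g)$ has $\operatorname{ind}=\operatorname{ind}(f)\cap\operatorname{ind}(g)$; for $h\mid f$, $f/h$ has $\operatorname{ind}=\operatorname{ind}(f)\setminus\operatorname{ind}(h)$. Order: $f\preceq_w g$ iff $\operatorname{ind}(f)\subseteq\operatorname{ind}(g)$; for equal-degree $f=x_{i_1}\cdots x_{i_s}$, $g=x_{j_1}\cdots x_{j_s}$ (increasing indices), $f\preceq_{sh}g$ iff $i_\ell\le j_\ell$ for all $\ell$; $f\preceq g$ iff $f\preceq_{sh}g^*\preceq_w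 g$ for some $g^*$. $\mathcal{I}$ is decreasing if $f\in\mathcal{I}$, $g\preceq f$ imply $g\in\mathcal{I}$; $\mathcal{I}_r=\{f\in\mathcal{I}:\deg f=r\}$. ${\rm LTA}(m,2)$ is the set of pairs $(\mathbf{B},\varepsilon)$ with $\mathbf{B}=(b_{i,j})\in\mathbb{F}_2^{m\times m}$ lower triangular with ones on the diagonal and $\varepsilon\in\mathbb{F}_2^m$; for a monomial $u$, $(\mathbf{B},\varepsilon)\cdot u\in\mathbf{R}_m$ replaces each variable $x_i$ of $u$ by $x_i+\sum_{j<i}b_{i,j}x_j+\varepsilon_i$. For a monomial $g$, ${\rm LTA}(m,2)_g$ is the set of $(\mathbf{B},\varepsilon)\in{\rm LTA}(m,2)$ with $\varepsilon_i=0$ for $i\notin\operatorname{ind}(g)$ and $b_{i,j}=0$ (for $j<i$) whenever $i\notin\operatorname{ind}(g)$ or $j\in\operatorname{ind}(g)$. For $G\subseteq{\rm LTA}(m,2)$ and monomial $u$, $G\cdot u=\{(\mathbf{B},\varepsilon)\cdot u:(\mathbf{B},\varepsilon)\in G\}$. For sets $\mathcal{S},\mathcal{T}\subseteq\mathbf{R}_m$: $\mathcal{S}+\mathcal{T}=\{s+t\}$, $\mathcal{S}\cdot\mathcal{T}=\{st\}$; $G\cdot h\cdot(\mathcal{S})$ is the product of the set $G\cdot h$ with the set $\mathcal{S}$. *)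

From mathcomp Require Import all_boot all_order all_algebra.
Set Implicit Arguments. Unset Strict Implicit. Unset Printing Implicit Defensive.
Import GRing.Theory.
Local Open Scope ring_scope.

(* Points of F_2^m and the ring R_m = F_2[x_0..x_{m-1}]/(x_i^2 - x_i),
   realised as the ring of functions F_2^m -> F_2 (evaluation isomorphism). *)
Definition pt (m : nat) := {ffun 'I_m -> 'F_2}.
Definition Rm (m : nat) := {ffun pt m -> 'F_2}.

Definition Radd m (p q : Rm m) : Rm m := [ffun v => p v + q v].
Definition Rmul m (p q : Rm m) : Rm m := [ffun v => p v * q v].

(* A monomial is represented by its index set ind(f). *)
Definition monomial (m : nat) := {set 'I_m}.
Definition deg m (f : monomial m) : nat := #|f|.
Definition mgcd m (f g : monomial m) : monomial m := f :&: g.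
Definition mdiv m (f h : monomial m) : monomial m := f :\: h.

Definition sidx m (f : monomial m) : seq nat := sort leq [seq val i | i <- enum f].

Definition weak_le m (f g : monomial m) : bool := f \subset g.
Definition shift_le m (f g : monomial m) : bool :=
  (deg f == deg g) && all2 leq (sidx f) (sidx g).
Definition mle m (f g : monomial m) : Prop :=
  exists gs : monomial m, shift_le f gs /\ weak_le gs g.

Definition decreasing m (I : {set monomial m}) : Prop :=
  forall f g, f \in I -> mle g f -> g \in I.

Definition maxdeg m (I : {set monomial m}) : nat := \max_(f in I) deg f.

Definition LTA m (B : 'M['F_2]_m) (e : 'rV['F_2]_m) : Prop :=
  (forall i j : 'I_m, (i < j)%N -> B i j = 0) /\ (forall i : 'I_m, B i i = 1).

Definition LTA_g m (g : monomial m) (B : 'M['F_2]_m) (e : 'rV['F_2]_m) : Prop :=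
  LTA B e /\ (forall i : 'I_m, i \notin g -> e 0 i = 0) /\
  (forall i j : 'I_m, (j < i)%N -> (i \notin g) || (j \in g) -> B i j = 0).

(* (B,e) . u : replace x_i by x_i + sum_{j<i} b_ij x_j + e_i *)
Definition act m (B : 'M['F_2]_m) (e : 'rV['F_2]_m) (u : monomial m) : Rm m :=
  [ffun v : pt m => \prod_(i in u)
      (v i + \sum_(j < m | (j < i)%N) B i j * v j + e 0 i)].

Definition ltaorb m (G : 'M['F_2]_m -> 'rV['F_2]_m -> Prop) (u : monomial m)
  : Rm m -> Prop := fun p => exists B e, G B e /\ p = act B e u.
Definition Sadd m (S T : Rm m -> Prop) : Rm m -> Prop :=
  fun p => exists s t, S s /\ T t /\ p = Radd s t.
Definition Smul m (S T : Rm m -> Prop) : Rm m -> Prop :=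
  fun p => exists s t, S s /\ T t /\ p = Rmul s t.

From mathcomp Require Import all_boot all_order all_algebra.
From mathcomp Require Import ring.
Import GRing.Theory.
Set Implicit Arguments. Unset Strict Implicit. Unset Printing Implicit Defensive.
Local Open Scope ring_scope.

(* Over F_2 the product of the affine forms (B,e).x_i, i in u, is the
   indicator function of the affine subspace on which all of them equal 1.
   Since (B,e) is lower triangular, forward substitution solves this system
   as x_i = s_i(x) (i in u), where s_i is an affine form in the variables
   x_j with j < i and j outside u; the forms x_i + s_i + 1 come from an
   element of LTA(m,2)_u and cut out the same subspace.  For the cofactor
   of h in f, one solves the system of f made of the h-rows of the first
   transformation and the (f/h)-rows of the second: on the support of the
   h-factor this replaces the (f/h)-factor by one coming from LTA(m,2)_f. *)

Lemma F2_cases (x : 'F_2) : x = 0 \/ x = 1.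
Proof. by case: x => [[|[|n]] //= lt_n2]; [left | right]; apply/val_inj. Qed.

Lemma F2_eq1_inj (a b : 'F_2) : (a == 1) = (b == 1) -> a = b.
Proof. by case: (F2_cases a) => ->; case: (F2_cases b) => ->. Qed.

Lemma F2_add1_eq1 (a b : 'F_2) : (a + b + 1 == 1) = (a == b).
Proof. by case: (F2_cases a) => ->; case: (F2_cases b) => ->. Qed.

Lemma F2_mul_eq1 (a b : 'F_2) : (a * b == 1) = (a == 1) && (b == 1).
Proof. by case: (F2_cases a) => ->; case: (F2_cases b) => ->. Qed.

Lemma F2_prod_eq1 (I : finType) (A : {pred I}) (x : I -> 'F_2) :
  (\prod_(i in A) x i == 1) = [forall i in A, x i == 1].
Proof.
apply/idP/forall_inP => [prod1 i Ai | all1]; last by rewrite big1 // => i /all1/eqP.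
case: (F2_cases (x i)) => [xi0 | -> //].
by rewrite (bigD1 i) //= xi0 mul0r in prod1.
Qed.

Section CausalFix.
Variables (V : Type) (m : nat).

Definition causal (F : ('I_m -> V) -> 'I_m -> V) :=
  forall X Y (k : 'I_m), (forall j : 'I_m, (j < k)%N -> X j = Y j) -> F X k = F Y k.

Definition causal_fix (F : ('I_m -> V) -> 'I_m -> V) (x0 : V) : 'I_m -> V :=
  iter m F (fun _ => x0).

Lemma causal_fixE F x0 : causal F -> forall k, causal_fix F x0 k = F (causal_fix F x0) k.
Proof.
move=> causalF.
have stable n (k : 'I_m) : (k < n)%N -> iter n.+1 F (fun _ => x0) k = iter n F (fun _ => x0) k.
  elim: n k => [//|n IHn] k lt_kn /=.
  by apply: causalF => j lt_jk; apply: IHn; apply: leq_trans lt_jk lt_kn.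
by move=> k; rewrite /causal_fix -stable.
Qed.

End CausalFix.

Definition act_var m (B : 'M['F_2]_m) (e : 'rV['F_2]_m) (i : 'I_m) (v : pt m) : 'F_2 :=
  v i + \sum_(j < m | (j < i)%N) B i j * v j + e 0 i.

Lemma actE m (B : 'M['F_2]_m) (e : 'rV['F_2]_m) (u : monomial m) (v : pt m) :
  act B e u v = \prod_(i in u) act_var B e i v.
Proof. by rewrite ffunE. Qed.

Lemma act_setID m (B : 'M['F_2]_m) (e : 'rV['F_2]_m) (A U : monomial m) (v : pt m) :
  act B e (A :&: U) v * act B e (A :\: U) v = act B e A v.
Proof. by rewrite !actE [RHS](big_setID U). Qed.

Lemma eq_act m (B B' : 'M['F_2]_m) (e e' : 'rV['F_2]_m) (u : monomial m) :
  (forall i, i \in u -> act_var B e i =1 act_var B' e' i) -> act B e u = act B' e' u.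
Proof. by move=> eq_var; apply/ffunP => v; rewrite !actE; apply: eq_bigr => i /eq_var. Qed.

Section Solve.
Variables (m : nat) (W : {set 'I_m}) (B : 'M['F_2]_m) (e : 'rV['F_2]_m).

Definition aff_eval (a : {ffun 'I_m -> 'F_2} * 'F_2) (v : pt m) : 'F_2 :=
  \sum_j a.1 j * v j + a.2.

(* For k in W, (B,e).x_k = 1 means x_k = 1 + e_k + sum_(j < k) b_kj x_j. *)
Definition solve_step (X : 'I_m -> {ffun 'I_m -> 'F_2} * 'F_2) (k : 'I_m) :=
  if k \in W then
    ([ffun j => \sum_(i < m | (i < k)%N) B k i * (X i).1 j],
     1 + e 0 k + \sum_(i < m | (i < k)%N) B k i * (X i).2)
  else ([ffun j => ((j == k) : nat)%:R], 0).

Definition solved := causal_fix solve_step ([ffun=> 0], 0).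

Definition solved_val (v : pt m) (k : 'I_m) := aff_eval (solved k) v.

Lemma solvedE (k : 'I_m) : solved k = solve_step solved k.
Proof.
apply: causal_fixE => X Y k' eqXY; rewrite /solve_step; case: ifP => // _.
congr (_, _ + _); last by apply: eq_bigr => i /eqXY ->.
by apply/ffunP => j; rewrite !ffunE; apply: eq_bigr => i /eqXY ->.
Qed.

Lemma solved_supp (k j : 'I_m) : (solved k).1 j != 0 -> (j \notin W) && (j <= k)%N.
Proof.
suff: forall n (k : 'I_m), (k < n)%N -> (solved k).1 j != 0 -> (j \notin W) && (j <= k)%N.
  by apply.
elim=> [//|n IHn] {}k lt_kn; rewrite solvedE /solve_step; case: ifP => kW; rewrite ffunE.
  apply: contraR => not_supp; apply/eqP; rewrite big1 // => i lt_ik.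
  suff ->: (solved i).1 j = 0 by rewrite mulr0.
  apply/eqP; apply: contraR not_supp => /(IHn i (leq_trans lt_ik lt_kn))/andP[-> le_ji].
  exact: leq_trans le_ji (ltnW lt_ik).
by case: (j =P k) => [-> _ | _]; rewrite ?kW ?leqnn ?eqxx.
Qed.

Lemma solved_val_notin (v : pt m) (k : 'I_m) : k \notin W -> solved_val v k = v k.
Proof.
move=> kW; rewrite /solved_val /aff_eval solvedE /solve_step (negbTE kW) addr0.
rewrite (bigD1 k) //= ffunE eqxx mul1r big1 ?addr0 // => j /negbTE neq_jk.
by rewrite ffunE neq_jk mul0r.
Qed.

Lemma solved_val_in (v : pt m) (k : 'I_m) : k \in W ->
  solved_val v k = 1 + e 0 k + \sum_(j < m | (j < k)%N) B k j * solved_val v j.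
Proof.
move=> kW; rewrite /solved_val /aff_eval solvedE /solve_step kW /=.
under eq_bigr do rewrite ffunE.
under [in RHS]eq_bigr do rewrite mulrDr.
rewrite big_split /=.
suff ->: \sum_j (\sum_(i < m | (i < k)%N) B k i * (solved i).1 j) * v j
       = \sum_(i < m | (i < k)%N) B k i * \sum_j (solved i).1 j * v j by ring.
under eq_bigr do rewrite mulr_suml; rewrite exchange_big /=.
by apply: eq_bigr => i _; rewrite mulr_sumr; apply: eq_bigr => j _; rewrite mulrA.
Qed.

Lemma act_var_solved (v : pt m) (k : 'I_m) : k \in W ->
  (forall j, j \in W -> (j < k)%N -> v j = solved_val v j) ->
  act_var B e k v = v k + solved_val v k + 1.
Proof.
move=> kW solved_below; rewrite (solved_val_in _ kW) /act_var.
have ->: \sum_(j < m | (j < k)%N) B k j * v j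
       = \sum_(j < m | (j < k)%N) B k j * solved_val v j.
  apply: eq_bigr => j lt_jk; case: (boolP (j \in W)) => jW.
    by rewrite solved_below.
  by rewrite solved_val_notin.
have two0 : (1 + 1 : 'F_2) = 0 by apply/eqP.
by rewrite -[LHS]addr0 -two0; ring.
Qed.

Lemma solved_system (U : {set 'I_m}) (v : pt m) :
  (forall i, i \in W -> if i \in U then act_var B e i v == 1 else v i == solved_val v i)
  <-> (forall i, i \in W -> v i == solved_val v i).
Proof.
split=> [mixed | solved_all i iW].
  suff: forall n (i : 'I_m), (i < n)%N -> i \in W -> v i == solved_val v i.
    by move=> below i; apply: below.
  elim=> [//|n IHn] i lt_in iW; have := mixed i iW; case: ifP => // _.
  rewrite act_var_solved ?F2_add1_eq1 // => j jW lt_ji.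
  exact/eqP/IHn/jW/(leq_trans lt_ji lt_in).
case: ifP => _; last exact: solved_all.
rewrite act_var_solved ?F2_add1_eq1 ?solved_all // => j jW _.
exact/eqP/solved_all.
Qed.

Definition red_mx : 'M['F_2]_m :=
  \matrix_(i, j) if (j < i)%N then (solved i).1 j else ((i == j) : nat)%:R.

Definition red_row : 'rV['F_2]_m :=
  \row_i (if i \in W then (solved i).2 + 1 else 0).

Lemma red_LTA_g : LTA_g W red_mx red_row.
Proof.
split; [split | split].
- move=> i j lt_ij; rewrite mxE ltnNge (ltnW lt_ij) /=.
  by case: eqP => // eq_ij; rewrite eq_ij ltnn in lt_ij.
- by move=> i; rewrite mxE ltnn eqxx.
- by move=> i iW; rewrite mxE (negbTE iW).
move=> i j lt_ji outside; rewrite mxE lt_ji.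
case: (eqVneq ((solved i).1 j) 0) => // /solved_supp/andP[jW le_ji].
case/orP: outside => [iW | jW']; last by rewrite jW' in jW.
move: jW; rewrite solvedE /solve_step (negbTE iW) ffunE.
by case: eqP => // eq_ji; rewrite eq_ji ltnn in lt_ji.
Qed.

Lemma act_var_red (v : pt m) (i : 'I_m) : i \in W ->
  act_var red_mx red_row i v = v i + solved_val v i + 1.
Proof.
move=> iW; rewrite /act_var /solved_val /aff_eval !mxE iW.
under eq_bigr => j lt_ji do rewrite mxE lt_ji.
rewrite [\sum_j _](bigID (fun j : 'I_m => (j < i)%N)) /=.
rewrite [X in _ = _ + (_ + X + _) + _]big1 ?addr0; first by ring.
move=> j ge_ji; case: (eqVneq ((solved i).1 j) 0) => [-> | /solved_supp/andP[jW le_ji]].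
  by rewrite mul0r.
have eq_ji : j = i by apply/val_inj/eqP; rewrite eqn_leq le_ji leqNgt.
by rewrite eq_ji iW in jW.
Qed.

Lemma act_red_mix (U : {set 'I_m}) (v : pt m) :
  act B e (W :&: U) v * act red_mx red_row (W :\: U) v = act red_mx red_row W v.
Proof.
have red_eq1 i : i \in W -> (act_var red_mx red_row i v == 1) = (v i == solved_val v i).
  by move=> iW; rewrite act_var_red // F2_add1_eq1.
apply: F2_eq1_inj; rewrite F2_mul_eq1 !actE !F2_prod_eq1.
apply/andP/forall_inP => [[/forall_inP onU /forall_inP offU] | red1].
  move=> i iW; rewrite red_eq1 //; apply: (solved_system U v).1 iW => j jW.
  case: ifP => jU; first by apply: onU; rewrite !inE jW jU.
  by rewrite -red_eq1 //; apply: offU; rewrite !inE jW jU.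
have mixed := (solved_system U v).2 (fun i iW => etrans (esym (red_eq1 i iW)) (red1 i iW)).
split; apply/forall_inP => i; rewrite !inE => /andP[].
  by move=> iW iU; have := mixed i iW; rewrite iU.
by move=> _ /red1.
Qed.

Lemma act_red : act B e W = act red_mx red_row W.
Proof.
apply/ffunP => v.
by rewrite -(act_red_mix W) setIid setDv [act _ _ set0 v]actE big_set0 mulr1.
Qed.

End Solve.

Definition glue_mx m (h : monomial m) (B1 B2 : 'M['F_2]_m) : 'M['F_2]_m :=
  \matrix_(i, j) if i \in h then B1 i j else B2 i j.

Definition glue_row m (h : monomial m) (e1 e2 : 'rV['F_2]_m) : 'rV['F_2]_m :=
  \row_i if i \in h then e1 0 i else e2 0 i.

Lemma act_var_glue m (h : monomial m) B1 B2 e1 e2 i (v : pt m) :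
  act_var (glue_mx h B1 B2) (glue_row h e1 e2) i v
  = if i \in h then act_var B1 e1 i v else act_var B2 e2 i v.
Proof.
rewrite /act_var mxE; case: ifP => ih.
  by under eq_bigr do rewrite mxE ih.
by under eq_bigr do rewrite mxE ih.
Qed.

Lemma act_red_cofactor m (h f : monomial m) B1 B2 e1 e2 : h \subset f ->
  let B := glue_mx h B1 B2 in let e := glue_row h e1 e2 in
  Rmul (act B1 e1 h) (act B2 e2 (f :\: h))
  = Rmul (act B1 e1 h) (act (red_mx f B e) (red_row f B e) (f :\: h)).
Proof.
move=> /setIidPr hf B e; apply/ffunP => v; rewrite ![Rmul _ _ v]ffunE.
have ->: act B1 e1 h = act B e (f :&: h).
  by rewrite hf; apply: eq_act => i ih w; rewrite act_var_glue ih.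
have ->: act B2 e2 (f :\: h) = act B e (f :\: h).
  by apply: eq_act => i; rewrite inE => /andP[/negbTE nih _] w; rewrite act_var_glue nih.
by rewrite act_setID act_red_mix act_red.
Qed.

Lemma red_ltaorb m (W u : monomial m) B e :
  ltaorb (LTA_g W) u (act (red_mx W B e) (red_row W B e) u).
Proof. by exists (red_mx W B e), (red_row W B e); split; first exact: red_LTA_g. Qed.

Lemma RmulDr m (a s t : Rm m) : Rmul a (Radd s t) = Radd (Rmul a s) (Rmul a t).
Proof. by apply/ffunP => v; rewrite !ffunE mulrDr. Qed.

Lemma Smul_intro m (S T : Rm m -> Prop) s t : S s -> T t -> Smul S T (Rmul s t).
Proof. by move=> Ss Tt; exists s, t. Qed.

Lemma Sadd_intro m (S T : Rm m -> Prop) s t : S s -> T t -> Sadd S T (Radd s t).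
Proof. by move=> Ss Tt; exists s, t. Qed.

Lemma ltaorb_mono m (G G' : 'M['F_2]_m -> 'rV['F_2]_m -> Prop) u :
  (forall B e, G B e -> G' B e) -> forall p, ltaorb G u p -> ltaorb G' u p.
Proof. by move=> GG' p [B [e [/GG' G'Be ->]]]; exists B, e. Qed.

Lemma Sadd_mono m (S S' T T' : Rm m -> Prop) :
  (forall p, S p -> S' p) -> (forall p, T p -> T' p) -> forall p, Sadd S T p -> Sadd S' T' p.
Proof. by move=> SS' TT' p [s [t [/SS' ? [/TT' ? ->]]]]; exists s, t. Qed.

Lemma Smul_mono m (S S' T T' : Rm m -> Prop) :
  (forall p, S p -> S' p) -> (forall p, T p -> T' p) -> forall p, Smul S T p -> Smul S' T' p.
Proof. by move=> SS' TT' p [s [t [/SS' ? [/TT' ? ->]]]]; exists s, t. Qed.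

Theorem lemma2 (m : nat) (I : {set monomial m}) (f g : monomial m) :
  (1 <= m)%N ->
  decreasing I ->
  f \in I -> deg f = maxdeg I ->
  g \in I -> deg g = maxdeg I ->
  let h := mgcd f g in
  forall p : Rm m,
    Smul (ltaorb (@LTA m) h)
      (Sadd (ltaorb (@LTA m) (mdiv f h)) (ltaorb (@LTA m) (mdiv g h))) p
    <->
    Smul (ltaorb (LTA_g h) h)
      (Sadd (ltaorb (LTA_g f) (mdiv f h)) (ltaorb (LTA_g g) (mdiv g h))) p.
Proof.
move=> _ _ _ _ _ _ h p; split; last first.
  by apply: Smul_mono; [|apply: Sadd_mono]; apply: ltaorb_mono => B e [].
case=> _ [_ [[B1 [e1 [_ ->]]] [[_ [_ [[B2 [e2 [_ ->]]] [[B3 [e3 [_ ->]]] ->]]]] ->]]].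
rewrite RmulDr (act_red_cofactor _ _ _ _ (subsetIl f g)).
rewrite (act_red_cofactor _ _ _ _ (subsetIr f g)) -RmulDr (act_red h).
by apply: Smul_intro; last apply: Sadd_intro; apply: red_ltaorb.
Qed.
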